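(* Let $d\ge2$ and $x\in X_d$. If for every grid $y\in\pi^{-1}(x)$ the closure $\overline{A_{d,x}y}\subset\pi^{-1}(x)$ contains an FL grid, then $x$ is GFL. In particular, if for every grid $y\in\pi^{-1}(x)$ the closure $\overline{A_{d,x}y}$ contains a rational grid, then $x$ is GFL.
   Context: $X_d$ is the space of unimodular lattices in $\mathbb{R}^d$, $Y_d$ the space of grids $x+v$ ($x\in X_d$, $v\in\mathbb{R}^d$), $\pi(x+v)=x$; the fiber $\pi^{-1}(x)$ is the torus $\mathbb{R}^d/x$. $A_d$ is the group of positive diagonal $d\times d$ matrices of determinant one, acting by $a(x+v)=ax+av$; $A_{d,x}$ is the stabilizer of $x$ in $A_d$, which acts on $\pi^{-1}(x)$. For $w\in\mathbb{R}^d$, $N(w)=\prod_iw_i$; $N(y)=\inf\{|N(w)|:w\in y\}$; $n(x+v)=x+nv$. A grid $y$ is FL if $N(ny)=0$ for some nonzero integer $n$. A lattice $x$ is GFL if every $y\in\pi^{-1}(x)$ is FL. A grid $y$ is rational if it is a torsion point of the torus $\pi^{-1}(\pi(y))$. *)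

From HB Require Import structures.
From mathcomp Require Import all_boot all_order all_algebra.
From mathcomp Require Import boolp classical_sets reals.
Set Implicit Arguments. Unset Strict Implicit. Unset Printing Implicit Defensive.
Import Order.TTheory GRing.Theory Num.Theory.
Local Open Scope ring_scope.
Local Open Scope classical_set_scope.

Section Defs.
Variables (R : realType) (d : nat).

Definition lattice_of (g : 'M[R]_d) : set 'rV[R]_d :=
  [set (map_mx (fun k : int => k%:~R) z) *m g | z in [set: 'rV[int]_d]].

Definition unimodular_lattice (x : set 'rV[R]_d) : Prop :=
  exists g : 'M[R]_d, `|\det g| = 1 /\ x = lattice_of g.

Definition Nw (w : 'rV[R]_d) : R := \prod_(i < d) w ord0 i.

Definition grid_N (x : set 'rV[R]_d) (v : 'rV[R]_d) : R :=
  inf [set `|Nw (w + v)| | w in x].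

(* the grid x+v is FL: N(n(x+v)) = N(x + n v) = 0 for some nonzero integer n *)
Definition FL (x : set 'rV[R]_d) (v : 'rV[R]_d) : Prop :=
  exists n : int, n != 0 /\ grid_N x (v *~ n) = 0.

Definition GFL (x : set 'rV[R]_d) : Prop := forall v, FL x v.

(* x+v is rational: torsion point of the torus R^d/x *)
Definition rational_grid (x : set 'rV[R]_d) (v : 'rV[R]_d) : Prop :=
  exists n : nat, (0 < n)%N /\ x (v *+ n).

(* A_d : positive diagonal matrices of determinant one, given by their diagonal *)
Definition A_d : set 'rV[R]_d :=
  [set a | (forall i, 0 < a ord0 i) /\ \prod_(i < d) a ord0 i = 1].

Definition act (a w : 'rV[R]_d) : 'rV[R]_d := \row_i (a ord0 i * w ord0 i).

Definition stab (x : set 'rV[R]_d) : set 'rV[R]_d :=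
  [set a | A_d a /\ [set act a w | w in x] = x].

(* the grid x+v' lies in the closure of A_{d,x}(x+v) inside the torus
   pi^{-1}(x) = R^d/x (quotient topology): a(x+v) = x + a v. *)
Definition in_orbit_closure (x : set 'rV[R]_d) (v v' : 'rV[R]_d) : Prop :=
  forall eps : R, 0 < eps ->
    exists a, stab x a /\
      exists w, x w /\ forall i, `|(act a v + w - v') ord0 i| < eps.

End Defs.

(* Approximating a grid by grids of its orbit cannot increase its norm: the
   diagonal flow preserves the product of coordinates and maps the lattice to
   itself, so a lattice point making [x + n v'] nearly norm-0 is transported,
   up to a small error, to one for [x + n v], and the product of coordinates
   is continuous.  Hence [N(n v) <= N(n v')], and FL passes from [v'] to [v].
   A rational grid [v'] is FL since [x + n v'] contains the origin. *)
From HB Require Import structures.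
From mathcomp Require Import all_boot all_order all_algebra.
From mathcomp Require Import boolp classical_sets reals.
From mathcomp Require Import ring lra.
Set Implicit Arguments. Unset Strict Implicit. Unset Printing Implicit Defensive.
Import Order.TTheory GRing.Theory Num.Theory.
Local Open Scope ring_scope.
Local Open Scope classical_set_scope.

Lemma prodr_cont_near (R : realFieldType) (I : Type) (s : seq I)
    (p : I -> R) (eps : R) :
  0 < eps -> exists2 del : R, 0 < del & forall q : I -> R,
    (forall i, `|q i - p i| < del) ->
    `|\prod_(i <- s) q i - \prod_(i <- s) p i| < eps.
Proof.
elim: s eps => [|i0 s IH] eps eps_gt0.
  by exists 1 => // q _; rewrite !big_nil subrr normr0.
set P := \prod_(i <- s) p i.
have p0_gt0 : 0 < `|p i0| + 1 by rewrite ltr_wpDl.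
have P_gt0 : 0 < `|P| + 1 by rewrite ltr_wpDl.
set e1 := eps / (2 * (`|p i0| + 1)); set e2 := eps / (2 * (`|P| + 1)).
have e1_gt0 : 0 < e1 by rewrite divr_gt0 // mulr_gt0.
have e2_gt0 : 0 < e2 by rewrite divr_gt0 // mulr_gt0.
have [d1 d1_gt0 near_tail] := IH _ e1_gt0.
exists (Num.min 1 (Num.min d1 e2)); first by rewrite !lt_min ltr01 d1_gt0 e2_gt0.
move=> q near_q; rewrite !big_cons -/P.
set Q := \prod_(i <- s) q i.
have QP : `|Q - P| < e1.
  by apply: near_tail => i; have := near_q i; rewrite !lt_min => /and3P[].
have /and3P[q0p0_1 _ q0p0_e2] : [&& `|q i0 - p i0| < 1,
    `|q i0 - p i0| < d1 & `|q i0 - p i0| < e2] by rewrite -!lt_min.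
have q0_le : `|q i0| <= `|p i0| + 1.
  have := ler_normD (q i0 - p i0) (p i0); rewrite subrK => /le_trans; apply.
  by rewrite addrC lerD2l ltW.
(* Split [q0 Q - p0 P = q0 (Q - P) + (q0 - p0) P]; each half is below [eps/2]. *)
have half1 : `|q i0| * `|Q - P| < eps / 2.
  apply: (le_lt_trans (ler_wpM2r _ q0_le)) => //.
  have -> : eps / 2 = (`|p i0| + 1) * e1 by rewrite /e1; field; rewrite gt_eqF.
  by rewrite ltr_pM2l.
have half2 : `|q i0 - p i0| * `|P| <= eps / 2.
  apply: (le_trans (ler_wpM2r _ (ltW q0p0_e2))) => //.
  have -> : e2 * `|P| = eps / 2 * (`|P| / (`|P| + 1)).
    by rewrite /e2; field; rewrite gt_eqF.
  rewrite -[leRHS]mulr1 ler_wpM2l ?divr_ge0 ?ltW //.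
  by rewrite ltr_pdivrMr // mul1r ltrDl.
have -> : q i0 * Q - p i0 * P = q i0 * (Q - P) + (q i0 - p i0) * P by ring.
apply: (le_lt_trans (ler_normD _ _)); rewrite !normrM; lra.
Qed.

Section Lattice.
Variables (R : realType) (d : nat).
Implicit Types (g : 'M[R]_d) (u v : 'rV[R]_d).

Lemma lattice_of0 g : lattice_of g 0.
Proof.
exists 0 => //; rewrite -[RHS](mul0mx _ g); congr (_ *m _).
by apply/matrixP => i j; rewrite !mxE.
Qed.

Lemma lattice_ofD g u v : lattice_of g u -> lattice_of g v -> lattice_of g (u + v).
Proof.
case=> z1 _ <-; case=> z2 _ <-; exists (z1 + z2) => //.
rewrite -mulmxDl; congr (_ *m _); apply/matrixP => i j.
by rewrite !mxE intrD.
Qed.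

Lemma lattice_ofMz g u k : lattice_of g u -> lattice_of g (u *~ k).
Proof.
case=> z _ <-; exists (\matrix_(i, j) (z i j * k)) => //.
rewrite -scaler_int scalemxAl; congr (_ *m _); apply/matrixP => i j.
by rewrite !mxE intrM mulrC.
Qed.

End Lattice.

Section Action.
Variables (R : realType) (d : nat).
Implicit Types a u v w : 'rV[R]_d.

Lemma Nw_act a w : A_d a -> Nw (act a w) = Nw w.
Proof.
case=> _ prod_a; rewrite /Nw.
under eq_bigr do rewrite mxE.
by rewrite big_split /= prod_a mul1r.
Qed.

Lemma actD a u v : act a (u + v) = act a u + act a v.
Proof. by apply/rowP => i; rewrite !mxE mulrDr. Qed.

Lemma actMz a v n : act a (v *~ n) = act a v *~ n.
Proof. by apply/rowP => i; rewrite -!scaler_int !mxE mulrCA. Qed.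

End Action.

Section GridNorm.
Variables (R : realType) (d : nat) (x : set 'rV[R]_d).
Implicit Types v w : 'rV[R]_d.

Let norms v := [set `|Nw (w + v)| | w in x].

Let norms_lb v : has_lbound (norms v).
Proof. by exists 0 => _ [w _ <-]. Qed.

Lemma grid_N_le v w : x w -> grid_N x v <= `|Nw (w + v)|.
Proof. by move=> xw; apply: ge_inf (norms_lb v) _ _; exists w. Qed.

Hypothesis x0 : x 0.

Lemma grid_N_ge0 v : 0 <= grid_N x v.
Proof. by apply: lb_le_inf => [|_ [w _ <-]]; first by exists `|Nw (0 + v)|, 0. Qed.

Lemma grid_N_lt_exists v m : grid_N x v < m -> exists2 w, x w & `|Nw (w + v)| < m.
Proof.
move=> /(inf_lt (ex_intro _ _ (ex_intro2 _ _ 0 x0 erefl))) [_ [w xw <-]].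
by exists w.
Qed.

End GridNorm.

Section OrbitClosure.
Variables (R : realType) (d : nat) (g : 'M[R]_d).
Let L := lattice_of g.

Lemma grid_N_orbit_closure v v' n : in_orbit_closure L v v' ->
  grid_N L (v *~ n) <= grid_N L (v' *~ n).
Proof.
move=> v'_cl; apply/ler_addgt0Pr => e e_gt0.
have e2_gt0 : 0 < e / 2 by rewrite divr_gt0.
have [w0 Lw0 w0_lt] : exists2 w0, L w0 &
    `|Nw (w0 + v' *~ n)| < grid_N L (v' *~ n) + e / 2.
  by apply: grid_N_lt_exists; [exact: lattice_of0 | rewrite ltrDl].
have [del del_gt0 prod_near] :=
  prodr_cont_near (index_enum 'I_d) (fun i => (w0 + v' *~ n) ord0 i) e2_gt0.
have n1_gt0 : 0 < `|n%:~R : R| + 1 by rewrite ltr_wpDl.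
have [a [[Aa Lstab] [w [Lw near_a]]]] :=
  v'_cl (del / (`|n%:~R| + 1)) (divr_gt0 del_gt0 n1_gt0).
(* The lattice point [w0 + n w] is [a w1] for some [w1] in the lattice, and
   [a (w1 + n v) = w0 + n (w + a v)] is close to [w0 + n v']. *)
have [w1 Lw1 aw1] : [set act a w | w in L] (w0 + w *~ n).
  by rewrite Lstab; apply: lattice_ofD Lw0 (lattice_ofMz _ Lw).
set q := w0 + w *~ n + act a v *~ n.
have q_near : `|Nw q - Nw (w0 + v' *~ n)| < e / 2.
  apply: (prod_near (fun i => q ord0 i)) => i.
  have -> : q ord0 i - (w0 + v' *~ n) ord0 i =
            (act a v + w - v') ord0 i * n%:~R.
    by rewrite /q !mxE -!scaler_int !mxE; ring.
  have := near_a i; rewrite ltr_pdivlMr // => /(le_lt_trans _); apply.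
  by rewrite normrM ler_wpM2l ?lerDl.
have := grid_N_le (v *~ n) Lw1.
rewrite -(Nw_act _ Aa) actD aw1 actMz -/q.
have := ler_normD (Nw q - Nw (w0 + v' *~ n)) (Nw (w0 + v' *~ n)).
rewrite subrK; lra.
Qed.

Lemma FL_orbit_closure v v' : in_orbit_closure L v v' -> FL L v' -> FL L v.
Proof.
move=> v'_cl [n [n_neq0 N_v'n]]; exists n; split => //.
apply/eqP; rewrite eq_le grid_N_ge0 ?andbT; last exact: lattice_of0.
by rewrite -N_v'n grid_N_orbit_closure.
Qed.

Lemma rational_grid_FL v : (0 < d)%N -> rational_grid L v -> FL L v.
Proof.
move=> d_gt0 [n [n_gt0 Lnv]]; exists n%:Z; split; first by rewrite eqz_nat -lt0n.
apply/eqP; rewrite eq_le grid_N_ge0 ?andbT; last exact: lattice_of0.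
have L_nv : L (- (v *+ n)) by rewrite -mulrN1z; apply: lattice_ofMz.
apply: le_trans (grid_N_le _ L_nv) _.
rewrite pmulrn addNr normr_le0 /Nw (bigD1 (Ordinal d_gt0)) //=.
by rewrite mxE mul0r.
Qed.

End OrbitClosure.

Theorem lemma4p4 (R : realType) (d : nat) (x : set 'rV[R]_d) :
  (2 <= d)%N -> unimodular_lattice x ->
  ((forall v : 'rV[R]_d, exists v' : 'rV[R]_d,
       in_orbit_closure x v v' /\ FL x v') -> GFL x) /\
  ((forall v : 'rV[R]_d, exists v' : 'rV[R]_d,
       in_orbit_closure x v v' /\ rational_grid x v') -> GFL x).
Proof.
move=> d_ge2 [g [_ ->]]; split=> orbit_cl v; have [v' [v'_cl v'_prop]] := orbit_cl v.
  exact: FL_orbit_closure v'_cl v'_prop.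
apply: FL_orbit_closure v'_cl (rational_grid_FL _ v'_prop).
exact: leq_trans d_ge2.
Qed.
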